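(* Let $(X,d,\kappa)$ be a digital metric space where $d$ is an $\ell_p$ metric for some $1\le p\le\infty$, let $\phi\in\Phi$, and let $T:X\to X$ be a digital $\phi$-contraction. Suppose $\phi(d(x,y))<1$ for all $x,y\in X$. Then $T$ is a constant function.
   Context: A digital metric space is a triple $(X,d,\kappa)$ where $X\subset\mathbb{Z}^n$ for some positive integer $n$, $\kappa$ is an adjacency relation on $X$, and $d$ is a metric on $X$. The $\ell_p$ metric on $\mathbb{Z}^n$ is $d(x,y)=(\sum_i|x_i-y_i|^p)^{1/p}$ for $1\le p<\infty$ and $\max_i|x_i-y_i|$ for $p=\infty$. $\Phi$ is the set of functions $\phi:[0,\infty)\to[0,\infty)$ that are increasing, satisfy $\phi(t)=0$ iff $t=0$, and $\phi(t)<t$ for $t>0$. $T$ is a digital $\phi$-contraction if $d(T(x),T(y))\le\phi(d(x,y))$ for all $x,y\in X$. *)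

From HB Require Import structures.
From mathcomp Require Import all_boot all_order all_algebra.
From mathcomp Require Import all_classical all_reals all_analysis.
Set Implicit Arguments. Unset Strict Implicit. Unset Printing Implicit Defensive.
Import Order.TTheory GRing.Theory Num.Theory.
Local Open Scope ring_scope.

(* The l_p metric on Z^n, for p : \bar R.  p = r%:E (finite, intended r >= 1)
   gives (sum_i |x_i - y_i|^r)^(1/r); p = +oo gives max_i |x_i - y_i|.
   (p = -oo is excluded by the hypothesis 1 <= p in the theorem.) *)
Definition lp_dist (R : realType) (n : nat) (p : \bar R)
    (x y : 'rV[int]_n) : R :=
  match p with
  | EFin r => powR (\sum_(i < n) powR (`|x ord0 i - y ord0 i|%:~R) r) r^-1
  | +oo%E => \big[Num.max/0]_(i < n) (`|x ord0 i - y ord0 i|%:~R : R)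
  | -oo%E => 0
  end.

(* The class Phi: phi : [0,oo) -> [0,oo), increasing (read as nondecreasing),
   phi t = 0 iff t = 0, and phi t < t for t > 0.  Only values on [0,oo) matter. *)
Definition in_Phi (R : realType) (phi : R -> R) : Prop :=
  [/\ (forall t, 0 <= t -> 0 <= phi t),
      (forall s t, 0 <= s -> s <= t -> phi s <= phi t),
      (forall t, 0 <= t -> (phi t = 0 <-> t = 0)) &
      (forall t, 0 < t -> phi t < t)].

Definition digital_phi_contraction (R : realType) (n : nat)
    (X : {pred 'rV[int]_n}) (d : 'rV[int]_n -> 'rV[int]_n -> R)
    (phi : R -> R) (T : 'rV[int]_n -> 'rV[int]_n) : Prop :=
  forall x y, x \in X -> y \in X -> d (T x) (T y) <= phi (d x y).

(* Distinct points of Z^n are at l_p distance at least 1, so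
   d(Tx, Ty) <= phi(d(x, y)) < 1 forces Tx = Ty. *)
From mathcomp Require Import all_boot all_order all_algebra.
From mathcomp Require Import all_classical all_reals all_analysis.
Set Implicit Arguments. Unset Strict Implicit.
Import Order.TTheory GRing.Theory Num.Theory.
Local Open Scope ring_scope.

Lemma row_neq_exists_coord (T : eqType) (n : nat) (x y : 'rV[T]_n) :
  x != y -> exists i, x ord0 i != y ord0 i.
Proof.
move=> x_neq_y; apply/existsP; move: x_neq_y; apply: contraNT.
rewrite negb_exists => /forallP coord_eq.
by apply/eqP/rowP => i; apply/eqP/negPn/coord_eq.
Qed.

Lemma coord_le_lp_dist (R : realType) (n : nat) (p : \bar R)
    (x y : 'rV[int]_n) (i : 'I_n) :
  (0 < p)%E -> (`|x ord0 i - y ord0 i|%:~R : R) <= lp_dist p x y.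
Proof.
case: p => [r r_gt0 | _ | //] /=.
- rewrite lte_fin in r_gt0.
  set a := (`|x ord0 i - y ord0 i|%:~R : R).
  have a_ge0 : 0 <= a by rewrite ler0z.
  have a_eq : a = (a `^ r) `^ r^-1 by rewrite -powRrM mulfV ?gt_eqF // powRr1.
  rewrite {1}a_eq; apply: ge0_ler_powR.
  + by rewrite invr_ge0 ltW.
  + by rewrite nnegrE powR_ge0.
  + by rewrite nnegrE sumr_ge0 // => j _; rewrite powR_ge0.
  + rewrite (bigD1 i) //= -/a lerDl.
    by apply: sumr_ge0 => j _; rewrite powR_ge0.
- by rewrite (bigD1 i) //= le_max lexx.
Qed.

Lemma lp_dist_ge1 (R : realType) (n : nat) (p : \bar R) (x y : 'rV[int]_n) :
  (0 < p)%E -> x != y -> 1 <= lp_dist p x y.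
Proof.
move=> p_gt0 /row_neq_exists_coord [i coord_neq].
apply: le_trans (coord_le_lp_dist x y i p_gt0).
(* On [int], [0 < z] and [1 <= z] are convertible. *)
by rewrite ler1z; rewrite -subr_eq0 -normr_gt0 in coord_neq.
Qed.

Theorem proposition7p3 (R : realType) (n : nat) (X : {pred 'rV[int]_n})
    (kappa : rel 'rV[int]_n) (p : \bar R) (phi : R -> R)
    (T : 'rV[int]_n -> 'rV[int]_n) :
  (1%:E <= p)%E ->
  in_Phi phi ->
  (forall x, x \in X -> T x \in X) ->
  digital_phi_contraction X (lp_dist p) phi T ->
  (forall x y, x \in X -> y \in X -> phi (lp_dist p x y) < 1) ->
  forall x y, x \in X -> y \in X -> T x = T y.
Proof.
move=> p_ge1 _ _ contraction phi_lt1 x y xX yX.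
have p_gt0 : (0 < p)%E by apply: lt_le_trans p_ge1; rewrite lte_fin.
apply/eqP; apply: contraT => Tx_neq_Ty.
have := le_lt_trans (contraction x y xX yX) (phi_lt1 x y xX yX).
by rewrite ltNge lp_dist_ge1.
Qed.
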